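(* Let $a<b$ be positive integers such that $b$ is not a multiple of $a$, and let $$B=\begin{pmatrix}0&-a&0&b\\1&0&-1&0\\0&a&0&-b\\-1&0&1&0\end{pmatrix}.$$ Then $B$ is skew-symmetrizable with skew-symmetrizer $\operatorname{diag}(1,a,1,b)$ (hence strongly primitive when $\gcd(a,b)=1$), and $B$ does not admit a global unfolding. More precisely, for every unfolding $(C,(e_i),(E_i))$ of $B$, the data $(\mu_2\mu_4(C),(e_i),(E_i))$ is not an unfolding of $\mu_2\mu_4(B)$: the $E_1\times E_3$ block of $\mu_2\mu_4(C)$ contains both a positive and a negative entry.
   Context: An $n\times n$ integer matrix $B$ is skew-symmetrizable if there is $D=\operatorname{diag}(d_1,\dots,d_n)$ with positive integer entries such that $DB$ is skew-symmetric; strongly primitive if such $D$ can be chosen with pairwise coprime $d_i$. Matrix mutation: $\mu_k(B)=B'$ with $b'_{ij}=-b_{ij}$ if $i=k$ or $j=k$, and $b'_{ij}=b_{ij}+\frac{b_{ik}|b_{kj}|+|b_{ik}|b_{kj}}{2}$ otherwise. An unfolding of $B$ is a triple $(C,(e_i)_{i=1}^n,(E_i)_{i=1}^n)$: positive integers $e_i$ with $b_{ij}e_j=-b_{ji}e_i$; disjoint index sets $E_i$ with $|E_i|=e_i$; a skew-symmetric integer matrix $C$ indexed by $\bigcup E_i$, such that (1) the sum of entries in each column of each $E_i\times E_j$ block of $C$ equals $b_{ij}$, and (2) if $b_{ij}\ge0$ then the $E_i\times E_j$ block of $C$ has all entries nonnegative. For an unfolding, the composite mutation $\mu_k=\prod_{\bar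 k\in E_k}\mu_{\bar k}$ of $C$ is well defined (its factors commute). $B$ admits a global unfolding if some unfolding $(C,(e_i),(E_i))$ has the property that for every finite sequence $(k_1,\dots,k_\ell)$ of indices, $(\mu_{k_\ell}\cdots\mu_{k_1}(C),(e_i),(E_i))$ is an unfolding of $\mu_{k_\ell}\cdots\mu_{k_1}(B)$. *)

From HB Require Import structures.
From mathcomp Require Import all_boot all_order all_algebra.
Set Implicit Arguments. Unset Strict Implicit. Unset Printing Implicit Defensive.
Import Order.TTheory GRing.Theory Num.Theory.
Local Open Scope ring_scope.

(* Integer matrices indexed by 'I_n (0-based: paper index i is here i-1). *)

Definition skew_symmetrizer (n : nat) (B : 'M[int]_n) (d : 'I_n -> nat) : Prop :=
  (forall i, (0 < d i)%N) /\
  (forall i j, (d i)%:Z * B i j = - ((d j)%:Z * B j i)).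

Definition skew_symmetrizable (n : nat) (B : 'M[int]_n) : Prop :=
  exists d, skew_symmetrizer B d.

Definition strongly_primitive (n : nat) (B : 'M[int]_n) : Prop :=
  exists d, skew_symmetrizer B d /\ (forall i j, i != j -> coprime (d i) (d j)).

(* Matrix mutation at k. The numerator is always even, so division is exact. *)
Definition mutate (n : nat) (k : 'I_n) (B : 'M[int]_n) : 'M[int]_n :=
  \matrix_(i, j)
    if (i == k) || (j == k) then - B i j
    else B i j + ((B i k * `|B k j| + `|B i k| * B k j) %/ 2)%Z.

(* Sequential mutation: mutate_seq [:: k1; ...; kl] B = mu_kl ... mu_k1 (B). *)
Definition mutate_seq (n : nat) (s : seq 'I_n) (B : 'M[int]_n) : 'M[int]_n :=
  foldl (fun M k => mutate k M) B s.

(* An unfolding: C is indexed by 'I_N = disjoint union of the blocks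
   E_i := [set r | p r == i]; e_i := #|E_i|. *)
Definition block (n N : nat) (p : 'I_N -> 'I_n) (i : 'I_n) : {set 'I_N} :=
  [set r | p r == i].

Definition unfolding (n N : nat) (B : 'M[int]_n) (C : 'M[int]_N) (p : 'I_N -> 'I_n) : Prop :=
  [/\ (forall i, (0 < #|block p i|)%N),
      (forall i j, B i j * (#|block p j|)%:Z = - (B j i * (#|block p i|)%:Z)),
      (forall r c, C r c = - C c r),
      (forall i j c, p c = j -> \sum_(r in block p i) C r c = B i j) &
      (forall i j r c, p r = i -> p c = j -> 0 <= B i j -> 0 <= C r c)].

Definition mutate_block (n N : nat) (p : 'I_N -> 'I_n) (k : 'I_n) (C : 'M[int]_N) : 'M[int]_N :=
  foldl (fun M kb => mutate kb M) C (enum (block p k)).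

Definition mutate_block_seq (n N : nat) (p : 'I_N -> 'I_n) (s : seq 'I_n) (C : 'M[int]_N)
  : 'M[int]_N :=
  foldl (fun M k => mutate_block p k M) C s.

Definition global_unfolding (n : nat) (B : 'M[int]_n) : Prop :=
  exists (N : nat) (C : 'M[int]_N) (p : 'I_N -> 'I_n),
    unfolding B C p /\
    forall s : seq 'I_n, unfolding (mutate_seq s B) (mutate_block_seq p s C) p.

Definition Bab (a b : nat) : 'M[int]_4 :=
  \matrix_(i < 4, j < 4)
    nth 0 (nth [::] [:: [:: 0; - a%:Z; 0; b%:Z];
                       [:: 1; 0; -1; 0];
                       [:: 0; a%:Z; 0; - b%:Z];
                       [:: -1; 0; 1; 0]] i) j.

Definition dab (a b : nat) (i : 'I_4) : nat := nth 0%N [:: 1; a; 1; b]%N i.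

Definition i1 : 'I_4 := inord 0.
Definition i2 : 'I_4 := inord 1.
Definition i3 : 'I_4 := inord 2.
Definition i4 : 'I_4 := inord 3.

From HB Require Import structures.
From mathcomp Require Import all_boot all_order all_algebra.
From mathcomp Require Import zify.
Import Order.TTheory GRing.Theory Num.Theory.
Local Open Scope ring_scope.

(* The sign pattern of B makes the blocks E1 x E4
   and E4 x E3 of C, and E1 x E2 and E2 x E3 of -C, nonnegative, with row and
   column sums prescribed by B; e.g. each row of E1 x E4 sums to 1, so it is
   the indicator of a single index.  Mutating C at E4 and then at E2 leaves, on
   the block E1 x E3 (where C vanishes), the entry
       C'(r,c) = sum_(l in E4) C(r,l) C(l,c) - sum_(k in E2) C(r,k) C(k,c),
   a difference of two path counts.  Double counting shows that the first
   count cannot be dominated by the second everywhere (that would give b <= a)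
   and the second cannot be dominated by the first everywhere (then every
   fibre of E1 -> E4 would be a union of fibres of E1 -> E2, of size a, so
   a | b).  So C' has entries of both signs on E1 x E3, whereas the (1,3)
   entry of mu2 mu4 (B) is b - a > 0: (mu2 mu4 (C), p) is not an unfolding. *)

Lemma pair_search {T : finType} (A B : {set T}) (R : T -> T -> bool) :
  (exists r c, [/\ r \in A, c \in B & R r c]) \/
  (forall r c, r \in A -> c \in B -> ~~ R r c).
Proof.
have [/exists_inP[r rA /exists_inP[c cB h]] | none] :=
  boolP [exists r in A, exists c in B, R r c]; first by left; exists r, c.
right=> r c rA cB; apply: contraNN none => h.
by apply/exists_inP; exists r => //; apply/exists_inP; exists c.
Qed.

Lemma sum_gt0_witness (T : finType) (A : {set T}) (f : T -> int) :
  (forall x, x \in A -> 0 <= f x) -> 0 < \sum_(x in A) f x ->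
  exists2 x, x \in A & 0 < f x.
Proof.
move=> f_ge0 sum_gt0; have [x /andP[xA fx]] : exists x, (x \in A) && (0 < f x).
  by apply: psumr_neq0P => //; apply/eqP; rewrite gt_eqF.
by exists x.
Qed.

Section UnitSum.
Context {T : finType} {A : {set T}} {f : T -> int}.
Hypothesis f_ge0 : forall x, x \in A -> 0 <= f x.
Hypothesis f_sum1 : \sum_(x in A) f x = 1.

Lemma unit_sum_indicator {x y : T} :
  x \in A -> 0 < f x -> y \in A -> f y = (y == x)%:R.
Proof.
move=> xA fx_gt0 yA.
have rest_ge0 : 0 <= \sum_(z in A | z != x) f z.
  by apply: sumr_ge0 => z /andP[zA _]; exact: f_ge0.
have split_x : 1 = f x + \sum_(z in A | z != x) f z by rewrite -f_sum1 (bigD1 x).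
have [-> | yx] := eqVneq y x; first by lia.
have rest0 : \sum_(z in A | z != x) f z = 0 by lia.
by apply: (psumr_eq0P _ rest0); [move=> z /andP[zA _]; exact: f_ge0 | rewrite yA yx].
Qed.

Lemma unit_sum_select x (g : T -> int) :
  x \in A -> 0 < f x -> \sum_(y in A) g y * f y = g x.
Proof.
move=> xA fx_gt0; rewrite (bigD1 x) //= (unit_sum_indicator xA fx_gt0 xA) eqxx mulr1.
rewrite big1 ?addr0 // => y /andP[yA yx].
by rewrite (unit_sum_indicator xA fx_gt0 yA) (negbTE yx) mulr0.
Qed.

End UnitSum.

Section PathCounting.
Context {T : finType} {E1 E2 E3 E4 : {set T}} {Y X W Z : T -> T -> int} {a b : nat}.
Hypothesis Y_ge0 : forall {r l}, r \in E1 -> l \in E4 -> 0 <= Y r l.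
Hypothesis X_ge0 : forall {r k}, r \in E1 -> k \in E2 -> 0 <= X r k.
Hypothesis W_ge0 : forall {l c}, l \in E4 -> c \in E3 -> 0 <= W l c.
Hypothesis Z_ge0 : forall {k c}, k \in E2 -> c \in E3 -> 0 <= Z k c.
Hypothesis Y_row : forall {r}, r \in E1 -> \sum_(l in E4) Y r l = 1.
Hypothesis X_row : forall {r}, r \in E1 -> \sum_(k in E2) X r k = 1.
Hypothesis W_col : forall {c}, c \in E3 -> \sum_(l in E4) W l c = 1.
Hypothesis Z_col : forall {c}, c \in E3 -> \sum_(k in E2) Z k c = 1.
Hypothesis Y_col : forall {l}, l \in E4 -> \sum_(r in E1) Y r l = b%:Z.
Hypothesis X_col : forall {k}, k \in E2 -> \sum_(r in E1) X r k = a%:Z.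
Hypothesis W_row : forall {l}, l \in E4 -> \sum_(c in E3) W l c = b%:Z.
Hypothesis Z_row : forall {k}, k \in E2 -> \sum_(c in E3) Z k c = a%:Z.

Let P r c := \sum_(l in E4) Y r l * W l c.
Let Q r c := \sum_(k in E2) X r k * Z k c.

Lemma paths_through_E4 l r c : l \in E4 -> c \in E3 -> 0 < W l c -> P r c = Y r l.
Proof. by move=> lE cE Wlc; apply: (unit_sum_select (fun l lE => W_ge0 lE cE) (W_col cE)). Qed.

Lemma paths_through_E2 k r c : k \in E2 -> c \in E3 -> 0 < Z k c -> Q r c = X r k.
Proof. by move=> kE cE Zkc; apply: (unit_sum_select (fun k kE => Z_ge0 kE cE) (Z_col cE)). Qed.

(* If a < b, some pair has more paths through E4 than through E2: otherwise,
   for c with W-support l0 and Z-support k, the fibre of l0 (size b) would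
   lie in the fibre of k (size a). *)
Lemma paths_excess l0 : l0 \in E4 -> (a < b)%N ->
  exists r c, [/\ r \in E1, c \in E3 & Q r c < P r c].
Proof.
move=> l0E lt_ab.
have [c cE Wc] : exists2 c, c \in E3 & 0 < W l0 c.
  by apply: sum_gt0_witness => [c cE|]; [exact: W_ge0 | rewrite W_row //; lia].
have [k kE Zk] : exists2 k, k \in E2 & 0 < Z k c.
  by apply: sum_gt0_witness => [k kE|]; [exact: Z_ge0 | rewrite Z_col].
have [// | P_le_Q] := pair_search E1 E3 (fun r c => Q r c < P r c).
have Y_le_X r : r \in E1 -> Y r l0 <= X r k.
  move=> rE; have := P_le_Q r c rE cE.
  by rewrite -leNgt (paths_through_E4 l0 r c l0E cE Wc) (paths_through_E2 k r c kE cE Zk).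
have : \sum_(r in E1) Y r l0 <= \sum_(r in E1) X r k by exact: ler_sum.
rewrite Y_col // X_col //; lia.
Qed.

(* If a does not divide b, some pair has more paths through E2 than through
   E4: otherwise Y r l0 is constant on each fibre of X (of size a), and the
   fibre of l0 (of size b) is a union of such fibres. *)
Lemma paths_deficit l0 : l0 \in E4 -> (0 < a)%N -> ~~ (a %| b)%N ->
  exists r c, [/\ r \in E1, c \in E3 & P r c < Q r c].
Proof.
move=> l0E a_gt0 ndvd_ab.
have [// | Q_le_P] := pair_search E1 E3 (fun r c => P r c < Q r c).
have Y_const k r r' : k \in E2 -> r \in E1 -> r' \in E1 ->
    0 < X r k -> 0 < X r' k -> Y r l0 = Y r' l0.
  move=> kE rE r'E Xr Xr'.
  have [c cE Zc] : exists2 c, c \in E3 & 0 < Z k c.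
    by apply: sum_gt0_witness => [c cE|]; [exact: Z_ge0 | rewrite Z_row //; lia].
  have [l1 l1E Wl1] : exists2 l1, l1 \in E4 & 0 < W l1 c.
    by apply: sum_gt0_witness => [l1 l1E|]; [exact: W_ge0 | rewrite W_col].
  have Y_ind s : s \in E1 -> 0 < X s k -> Y s l0 = (l0 == l1)%:R.
    move=> sE Xs; apply: (unit_sum_indicator (fun l => Y_ge0 sE) (Y_row sE) l1E _ l0E).
    have := Q_le_P s c sE cE.
    rewrite -leNgt (paths_through_E4 l1 s c l1E cE Wl1) (paths_through_E2 k s c kE cE Zc).
    exact: lt_le_trans Xs.
  by rewrite !Y_ind.
have fibre_dvd k : k \in E2 -> (a%:Z %| \sum_(r in E1) X r k * Y r l0)%Z.
  move=> kE; have [r0 r0E Xr0] : exists2 r0, r0 \in E1 & 0 < X r0 k.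
    by apply: sum_gt0_witness => [r rE|]; [exact: X_ge0 | rewrite X_col //; lia].
  rewrite (eq_bigr (fun r => X r k * Y r0 l0)).
    by rewrite -big_distrl /= X_col // dvdz_mulr.
  move=> r rE; have [Xr | Xr] := ltrP 0 (X r k); first by rewrite (Y_const k r r0).
  have X0 : X r k = 0 by have := X_ge0 rE kE; lia.
  by rewrite X0 !mul0r.
move/negP: ndvd_ab; case; suff : (a%:Z %| b%:Z)%Z by rewrite dvdzE.
rewrite -(Y_col l0E) (eq_bigr (fun r => \sum_(k in E2) X r k * Y r l0)); last first.
  by move=> r rE; rewrite -big_distrl /= X_row // mul1r.
by rewrite exchange_big /=; apply: rpred_sum => k kE; exact: fibre_dvd.
Qed.

End PathCounting.

Lemma half_double (m : int) : ((m + m) %/ 2)%Z = m.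
Proof. have -> : m + m = m * 2 by lia. by rewrite mulzK. Qed.

Lemma mutation_term_ge0 (x y : int) :
  0 <= x -> 0 <= y -> ((x * `|y| + `|x| * y) %/ 2)%Z = x * y.
Proof. by move=> x_ge0 y_ge0; rewrite !ger0_norm // half_double. Qed.

Lemma mutation_term_le0 (x y : int) :
  x <= 0 -> y <= 0 -> ((x * `|y| + `|x| * y) %/ 2)%Z = - (x * y).
Proof. by move=> x_le0 y_le0; rewrite !ler0_norm // mulrN mulNr half_double. Qed.

Lemma mutation_term0l (y : int) : ((0 * `|y| + `|0| * y) %/ 2)%Z = 0.
Proof. by rewrite normr0 !mul0r addr0 div0z. Qed.

Lemma mutation_term0r (x : int) : ((x * `|0| + `|x| * 0) %/ 2)%Z = 0.
Proof. by rewrite normr0 !mulr0 addr0 div0z. Qed.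

(* Mutating successively at the indices of s, when M vanishes on s x s,
   adds up the corrections computed in M itself: the mutations do not
   interact. *)
Lemma mutate_foldl_entry (N : nat) (s : seq 'I_N) (M : 'M[int]_N) r c :
  uniq s -> (forall x y, x \in s -> y \in s -> M x y = 0) -> r \notin s -> c \notin s ->
  foldl (fun M k => mutate k M) M s r c =
  M r c + \sum_(k <- s) ((M r k * `|M k c| + `|M r k| * M k c) %/ 2)%Z.
Proof.
elim: s M => [|k s IH] M /=; first by move=> *; rewrite big_nil addr0.
case/andP => k_notin_s uniq_s M_zero; rewrite !inE !negb_or.
move=> /andP[rk r_notin_s] /andP[ck c_notin_s].
have M_sk x : x \in s -> M x k = 0 by move=> xs; apply: M_zero; rewrite inE ?xs ?eqxx ?orbT.
have M_ks x : x \in s -> M k x = 0 by move=> xs; apply: M_zero; rewrite inE ?xs ?eqxx ?orbT.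
have neq_k x : x \in s -> x != k by move=> xs; apply: contraNneq k_notin_s => <-.
rewrite IH //; last first.
  move=> x y xs ys; rewrite mxE (negbTE (neq_k x xs)) (negbTE (neq_k y ys)) /=.
  by rewrite M_zero ?inE ?xs ?ys ?orbT // M_sk // M_ks // mutation_term0l addr0.
rewrite big_cons addrA; congr (_ + _); first by rewrite mxE (negbTE rk) (negbTE ck).
apply: eq_big_seq => x xs; rewrite !mxE (negbTE rk) (negbTE ck) (negbTE (neq_k x xs)) /=.
by rewrite (M_ks x) // (M_sk x) // mutation_term0l mutation_term0r !addr0.
Qed.

Lemma mutate_block_entry (n N : nat) (p : 'I_N -> 'I_n) k (M : 'M[int]_N) r c :
  (forall x y, p x = k -> p y = k -> M x y = 0) -> p r != k -> p c != k ->
  mutate_block p k M r c =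
  M r c + \sum_(x in block p k) ((M r x * `|M x c| + `|M r x| * M x c) %/ 2)%Z.
Proof.
move=> M_zero rk ck; rewrite /mutate_block mutate_foldl_entry ?enum_uniq ?big_enum //.
- by move=> x y; rewrite !mem_enum !inE => /eqP xk /eqP yk; exact: M_zero.
- by rewrite mem_enum inE.
- by rewrite mem_enum inE.
Qed.

Section UnfoldingSigns.
Context {n N : nat} {B : 'M[int]_n} {C : 'M[int]_N} {p : 'I_N -> 'I_n}.
Hypothesis unfC : unfolding B C p.

Lemma in_block x i : (x \in block p i) = (p x == i).
Proof. by rewrite inE. Qed.

Lemma unfolding_col_sum i c : \sum_(r in block p i) C r c = B i (p c).
Proof. by case: unfC => _ _ _ col_sum _; exact: col_sum. Qed.

Lemma unfolding_row_sum j r : \sum_(c in block p j) C r c = - B j (p r).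
Proof.
case: unfC => _ _ skewC _ _; rewrite -unfolding_col_sum -sumrN.
by apply: eq_bigr => c _; rewrite skewC.
Qed.

Lemma unfolding_ge0 r c : 0 <= B (p r) (p c) -> 0 <= C r c.
Proof. by case: unfC => _ _ _ _ sign; exact: sign. Qed.

Lemma unfolding_le0 r c : 0 <= B (p c) (p r) -> C r c <= 0.
Proof.
by case: unfC => _ _ skewC _ _ /unfolding_ge0; rewrite skewC oppr_ge0.
Qed.

(* Zero entries of B give zero blocks of C, being sums of nonnegative entries. *)
Lemma unfolding_zero r c : B (p r) (p c) = 0 -> C r c = 0.
Proof.
move=> B0; have col0 := unfolding_col_sum (p r) c; rewrite B0 in col0.
apply: (psumr_eq0P _ col0); last by rewrite in_block.
by move=> x; rewrite in_block => /eqP px; apply: unfolding_ge0; rewrite px B0.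
Qed.

Lemma mutate_block_pair_entry k l r c :
  k != l -> B k k = 0 -> B l l = 0 -> B k l = 0 -> B l k = 0 ->
  p r \notin [:: k; l] -> p c \notin [:: k; l] ->
  0 <= B (p r) l -> 0 <= B l (p c) -> 0 <= B k (p r) -> 0 <= B (p c) k ->
  mutate_block p k (mutate_block p l C) r c =
  C r c + \sum_(x in block p l) C r x * C x c - \sum_(y in block p k) C r y * C y c.
Proof.
move=> kl Bkk Bll Bkl Blk; rewrite !inE !negb_or => /andP[rk rl] /andP[ck cl].
move=> Brl Blc Bkr Bck; set C1 := mutate_block p l C.
have C_zero x y i j : p x = i -> p y = j -> B i j = 0 -> C x y = 0.
  by move=> <- <-; exact: unfolding_zero.
have C1E x y : p x != l -> p y != l -> C1 x y =
    C x y + \sum_(z in block p l) ((C x z * `|C z y| + `|C x z| * C z y) %/ 2)%Z.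
  by apply: mutate_block_entry => x' y' xl yl; apply: (C_zero _ _ l l).
have C1_kk x y : p x = k -> p y = k -> C1 x y = 0.
  move=> xk yk; rewrite C1E ?xk ?yk // (C_zero _ _ k k) // add0r.
  by apply: big1 => z /[!in_block] /eqP zl; rewrite (C_zero _ _ k l) ?mutation_term0l.
have C1_rk y : p y = k -> C1 r y = C r y.
  move=> yk; rewrite C1E ?yk // big1 ?addr0 // => z /[!in_block] /eqP zl.
  by rewrite (C_zero z y l k) ?mutation_term0r.
have C1_kc y : p y = k -> C1 y c = C y c.
  move=> yk; rewrite C1E ?yk // big1 ?addr0 // => z /[!in_block] /eqP zl.
  by rewrite (C_zero y z k l) ?mutation_term0l.
rewrite mutate_block_entry // C1E // -sumrN; congr (_ + _ + _).
  apply: eq_bigr => x /[!in_block] /eqP xl.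
  by apply: mutation_term_ge0; apply: unfolding_ge0; rewrite xl.
apply: eq_bigr => y /[!in_block] /eqP yk; rewrite C1_rk // C1_kc //.
by apply: mutation_term_le0; apply: unfolding_le0; rewrite yk.
Qed.

End UnfoldingSigns.

Section Example.
Context {a b : nat}.

Lemma Bab_skew_symmetrizer : (0 < a)%N -> (0 < b)%N -> skew_symmetrizer (Bab a b) (dab a b).
Proof.
move=> a_gt0 b_gt0; split; first by move=> [[|[|[|[|i]]]] hi] //=; rewrite /dab /=; lia.
by move=> [[|[|[|[|i]]]] hi] [[|[|[|[|j]]]] hj] //; rewrite /Bab /dab !mxE /=; lia.
Qed.

Lemma Bab_strongly_primitive :
  (0 < a)%N -> (0 < b)%N -> coprime a b -> strongly_primitive (Bab a b).
Proof.
move=> a_gt0 b_gt0 cop_ab; exists (dab a b); split; first exact: Bab_skew_symmetrizer.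
move=> [[|[|[|[|i]]]] hi] [[|[|[|[|j]]]] hj] //= _; rewrite /dab /=;
  by rewrite ?coprime1n ?coprimen1 // coprime_sym.
Qed.

Lemma mutated_Bab_13 : mutate_seq [:: i4; i2] (Bab a b) i1 i3 = b%:Z - a%:Z.
Proof.
rewrite /mutate_seq /= !mxE -!val_eqE /= !inordK //=.
rewrite !(normr0, normr1, normrN, mulr0, mul0r, mulr1, addr0, add0r, div0z).
by rewrite ger0_norm // mulrN1 !half_double.
Qed.

(* On E1 x E3, mu2 mu4 (C) counts paths through E4 minus paths through E2
   (the latter written with the nonnegative entries -C of E1 x E2, E2 x E3). *)
Lemma Bab_two_step_entry {N : nat} {C : 'M[int]_N} {p : 'I_N -> 'I_4} r c :
  unfolding (Bab a b) C p -> p r = i1 -> p c = i3 ->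
  mutate_block_seq p [:: i4; i2] C r c =
  \sum_(l in block p i4) C r l * C l c - \sum_(k in block p i2) - C r k * - C k c.
Proof.
move=> unfC pr pc; under [X in _ = _ - X]eq_bigr do rewrite mulrNN.
rewrite /mutate_block_seq /= (mutate_block_pair_entry unfC) //.
all: rewrite ?pr ?pc ?inE -?val_eqE ?mxE /= ?inordK //=.
by rewrite (unfolding_zero unfC) ?add0r // pr pc mxE !inordK.
Qed.

(* By the sign and sum constraints of
   the unfolding, the blocks C on E1 x E4, E4 x E3 and -C on E1 x E2,
   E2 x E3 satisfy the hypotheses of the path-counting lemmas. *)
Lemma Bab_two_step_sign_mixed {N : nat} {C : 'M[int]_N} {p : 'I_N -> 'I_4} :
  (0 < a)%N -> (a < b)%N -> ~~ (a %| b)%N -> unfolding (Bab a b) C p ->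
  let C' := mutate_block_seq p [:: i4; i2] C in
  (exists r c, [/\ p r = i1, p c = i3 & 0 < C' r c]) /\
  (exists r c, [/\ p r = i1, p c = i3 & C' r c < 0]).
Proof.
move=> a_gt0 lt_ab ndvd_ab unfC C'.
have [l0 l0E] : exists l0, l0 \in block p i4.
  by case: unfC => card_gt0 _ _ _ _; apply/card_gt0P.
have ge0 x y i j : x \in block p i -> y \in block p j -> 0 <= Bab a b i j -> 0 <= C x y.
  by rewrite !in_block => /eqP <- /eqP <-; exact: unfolding_ge0.
have ge0N x y i j : x \in block p i -> y \in block p j -> 0 <= Bab a b j i -> 0 <= - C x y.
  by rewrite oppr_ge0 !in_block => /eqP <- /eqP <-; exact: unfolding_le0.
have row_sum x i j : x \in block p i -> \sum_(y in block p j) C x y = - Bab a b j i.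
  by rewrite in_block => /eqP <-; exact: unfolding_row_sum.
have col_sum y i j : y \in block p j -> \sum_(x in block p i) C x y = Bab a b i j.
  by rewrite in_block => /eqP <-; exact: unfolding_col_sum.
have Y_ge0 r l : r \in block p i1 -> l \in block p i4 -> 0 <= C r l.
  by move=> rE lE; apply: ge0 rE lE _; rewrite mxE !inordK.
have X_ge0 r k : r \in block p i1 -> k \in block p i2 -> 0 <= - C r k.
  by move=> rE kE; apply: ge0N rE kE _; rewrite mxE !inordK.
have W_ge0 l c : l \in block p i4 -> c \in block p i3 -> 0 <= C l c.
  by move=> lE cE; apply: ge0 lE cE _; rewrite mxE !inordK.
have Z_ge0 k c : k \in block p i2 -> c \in block p i3 -> 0 <= - C k c.
  by move=> kE cE; apply: ge0N kE cE _; rewrite mxE !inordK.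
have Y_row r : r \in block p i1 -> \sum_(l in block p i4) C r l = 1.
  by move=> rE; rewrite (row_sum _ _ _ rE) mxE !inordK.
have X_row r : r \in block p i1 -> \sum_(k in block p i2) - C r k = 1.
  by move=> rE; rewrite sumrN (row_sum _ _ _ rE) mxE !inordK.
have W_col c : c \in block p i3 -> \sum_(l in block p i4) C l c = 1.
  by move=> cE; rewrite (col_sum _ _ _ cE) mxE !inordK.
have Z_col c : c \in block p i3 -> \sum_(k in block p i2) - C k c = 1.
  by move=> cE; rewrite sumrN (col_sum _ _ _ cE) mxE !inordK.
have Y_col l : l \in block p i4 -> \sum_(r in block p i1) C r l = b%:Z.
  by move=> lE; rewrite (col_sum _ _ _ lE) mxE !inordK.
have X_col k : k \in block p i2 -> \sum_(r in block p i1) - C r k = a%:Z.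
  by move=> kE; rewrite sumrN (col_sum _ _ _ kE) mxE !inordK /= ?opprK.
have W_row l : l \in block p i4 -> \sum_(c in block p i3) C l c = b%:Z.
  by move=> lE; rewrite (row_sum _ _ _ lE) mxE !inordK /= ?opprK.
have Z_row k : k \in block p i2 -> \sum_(c in block p i3) - C k c = a%:Z.
  by move=> kE; rewrite sumrN (row_sum _ _ _ kE) mxE !inordK /= ?opprK.
have [r [c [rE cE pos]]] :=
  paths_excess W_ge0 Z_ge0 W_col Z_col Y_col X_col W_row _ l0E lt_ab.
have [r' [c' [r'E c'E neg]]] := paths_deficit Y_ge0 X_ge0 W_ge0 Z_ge0 Y_row X_row
  W_col Z_col Y_col X_col Z_row _ l0E a_gt0 ndvd_ab.
move: rE cE r'E c'E; rewrite !in_block => /eqP pr /eqP pc /eqP pr' /eqP pc'.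
by split; [exists r, c | exists r', c']; rewrite /C' Bab_two_step_entry // ?subr_gt0 ?subr_lt0.
Qed.

(* Consequently (mu2 mu4 (C), p) is not an unfolding of mu2 mu4 (B), whose
   (1, 3) entry b - a is positive. *)
Lemma Bab_two_step_obstruction {N : nat} {C : 'M[int]_N} {p : 'I_N -> 'I_4} :
  (0 < a)%N -> (a < b)%N -> ~~ (a %| b)%N -> unfolding (Bab a b) C p ->
  let C' := mutate_block_seq p [:: i4; i2] C in
  [/\ ~ unfolding (mutate_seq [:: i4; i2] (Bab a b)) C' p,
      (exists r c, [/\ p r = i1, p c = i3 & 0 < C' r c]) &
      (exists r c, [/\ p r = i1, p c = i3 & C' r c < 0])].
Proof.
move=> a_gt0 lt_ab ndvd_ab unfC C'.
have [pos [r [c [pr pc neg]]]] := Bab_two_step_sign_mixed a_gt0 lt_ab ndvd_ab unfC.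
split=> [unfC'|//|]; last by exists r, c.
have := unfolding_ge0 unfC' r c.
rewrite pr pc mutated_Bab_13 subr_ge0 lez_nat ltnW // => /(_ isT) C'_ge0.
by have := lt_le_trans neg C'_ge0; rewrite ltxx.
Qed.

End Example.

Theorem mainTheorem19 (a b : nat) (ha : (0 < a)%N) (hab : (a < b)%N) (hdiv : ~~ (a %| b)%N) :
  [/\ skew_symmetrizer (Bab a b) (dab a b),
      (coprime a b -> strongly_primitive (Bab a b)),
      ~ global_unfolding (Bab a b) &
      forall (N : nat) (C : 'M[int]_N) (p : 'I_N -> 'I_4),
        unfolding (Bab a b) C p ->
        let C' := mutate_block_seq p [:: i4; i2] C in
        [/\ ~ unfolding (mutate_seq [:: i4; i2] (Bab a b)) C' p,
            (exists r c, [/\ p r = i1, p c = i3 & 0 < C' r c]) &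
            (exists r c, [/\ p r = i1, p c = i3 & C' r c < 0])]].
Proof.
have hb : (0 < b)%N by apply: leq_trans hab.
have obstruction N C p := @Bab_two_step_obstruction a b N C p ha hab hdiv.
split; [exact: Bab_skew_symmetrizer | exact: Bab_strongly_primitive | | exact: obstruction].
case=> N [C [p [unfC all_steps]]].
by have [not_unf _ _] := obstruction N C p unfC; apply: not_unf; exact: all_steps.
Qed.
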